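(* Let $G$ be a graph on $n$ vertices with degrees $d_1,\ldots,d_n$, let $\overline{G}$ be its complement with signless Laplacian eigenvalues $\overline{q}_1\ge\cdots\ge\overline{q}_n$, and let $t\ge 1$ be an integer. Then the signless Laplacian eigenvalues of $\overline{G^{(t)}}$ (the complement of the blow-up $G^{(t)}$), listed with multiplicity (a total of $tn$ values), are $t\overline{q}_1+2(t-1),\ldots,t\overline{q}_n+2(t-1)$ together with $tn-td_1-2,\ldots,tn-td_n-2$, where each $tn-td_i-2$ ($i=1,\ldots,n$) is taken with multiplicity $t-1$.
   Context: All graphs are simple and undirected; $\overline{H}$ denotes the complement of a graph $H$. For a graph $H$, $A(H)$ is its adjacency matrix, $D(H)$ the diagonal matrix of its vertex degrees, and $Q(H)=D(H)+A(H)$ its signless Laplacian matrix; signless Laplacian eigenvalues are the eigenvalues of $Q(H)$. For a graph $G$ and an integer $t\ge 1$, the blow-up $G^{(t)}$ is the graph obtained by replacing each vertex $u$ of $G$ by a set $V_u$ of $t$ pairwise nonadjacent vertices, and each edge $\{u,v\}$ of $G$ by a complete bipartite graph with parts $V_u$ and $V_v$ (so $A(G^{(t)})=A(G)\otimes J_t$, with $J_t$ the $t\times t$ all-ones matrix). *)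

From HB Require Import structures.
From mathcomp Require Import all_boot all_order all_algebra.
Set Implicit Arguments. Unset Strict Implicit.
Import Order.TTheory GRing.Theory Num.Theory.
Local Open Scope ring_scope.

Definition simple_graph (T : finType) (e : rel T) : Prop :=
  irreflexive e /\ symmetric e.

Definition compl_graph (T : finType) (e : rel T) : rel T :=
  fun x y => (x != y) && ~~ e x y.

Definition blowup (T : finType) (t : nat) (e : rel T) : rel (T * 'I_t) :=
  fun x y => e x.1 y.1.

Definition deg (T : finType) (e : rel T) (x : T) : nat := #|[set y | e x y]|.

Definition adjmx (R : nzRingType) (T : finType) (e : rel T) : 'M[R]_#|T| :=
  \matrix_(i, j) (e (enum_val i) (enum_val j))%:R.

Definition degmx (R : nzRingType) (T : finType) (e : rel T) : 'M[R]_#|T| :=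
  \matrix_(i, j) ((i == j)%:R * (deg e (enum_val i))%:R).

Definition sless_lap (R : nzRingType) (T : finType) (e : rel T) : 'M[R]_#|T| :=
  degmx R e + adjmx R e.
Arguments blowup {T} t e.

From HB Require Import structures.
From mathcomp Require Import all_boot all_order all_algebra perm.
From mathcomp Require Import ring.
Import Order.TTheory GRing.Theory Num.Theory.
Local Open Scope ring_scope.

(* In the complement of G^(t), distinct vertices (u, i) and (v, j) are
   adjacent iff u and v are not adjacent in G, and (u, i) has degree
   tn - t d_u - 1.  Hence Q = N (x) J_t + diag(y) (x) I_t with N = J - A(G)
   and y_u = tn - t d_u - 2.  In the basis formed by the indicator vectors of
   the classes V_u and the unit vectors of the copies (u, i), i >= 1, this
   matrix is block upper triangular, with diagonal blocks
   t N + diag(y) = t Q(complement of G) + 2(t - 1) I and diag(y) repeated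
   t - 1 times. *)

Lemma char_poly_similar {R : idomainType} {n} (A B S : 'M[R]_n) :
  A *m S = S *m B -> \det S != 0 -> char_poly A = char_poly B.
Proof.
move=> AS_SB detS_neq0.
have : char_poly_mx A *m map_mx polyC S = map_mx polyC S *m char_poly_mx B.
  rewrite /char_poly_mx mulmxBl mulmxBr -!map_mxM AS_SB.
  by rewrite mul_scalar_mx mul_mx_scalar.
move/(congr1 determinant); rewrite !det_mulmx det_map_mx /= [X in X = _]mulrC.
by apply: mulfI; rewrite polyC_eq0.
Qed.

Lemma char_poly_perm {R : idomainType} {n} (s : 'S_n) (A : 'M[R]_n) :
  char_poly (row_perm s (col_perm s A)) = char_poly A.
Proof.
apply: (@char_poly_similar _ _ _ _ (perm_mx s)).
  by rewrite row_permE col_permE -!mulmxA -perm_mxM mulVg perm_mx1 mulmx1.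
by rewrite det_perm signr_eq0.
Qed.

Lemma char_poly_reindex {R : idomainType} {J : finType} {m} (h : 'I_m -> J)
    (F : J -> J -> R) : bijective h ->
  char_poly (\matrix_(i, j) F (h i) (h j) : 'M[R]_m) =
  char_poly (\matrix_(i, j) F (enum_val i) (enum_val j) : 'M[R]_#|J|).
Proof.
move=> h_bij; have m_eq : m = #|J| by rewrite -(card_ord m); exact: bij_eq_card h_bij.
subst m.
have rank_h_inj : injective (fun i => enum_rank (h i)).
  by move=> i j /enum_rank_inj; apply: (bij_inj h_bij).
rewrite -[RHS](char_poly_perm (perm rank_h_inj)); congr char_poly.
by apply/matrixP => i j; rewrite !mxE !permE /= !enum_rankK.
Qed.

Lemma char_poly_ublock (R : comNzRingType) n1 n2 (A : 'M[R]_n1)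
    (B : 'M[R]_(n1, n2)) (D : 'M[R]_n2) :
  char_poly (block_mx A B 0 D) = char_poly A * char_poly D.
Proof.
rewrite /char_poly /char_poly_mx map_block_mx /= map_mx0 (scalar_mx_block n1 n2).
by rewrite opp_block_mx add_block_mx oppr0 addr0 det_ublock.
Qed.

(* The substitution [X |-> (X - c) / a] carries [char_poly A] to
   [char_poly (a A + c)] up to the factor [a ^+ n]. *)
Lemma char_poly_affine {R : fieldType} {n} {A : 'M[R]_n} {a c : R}
    {q : 'I_n -> R} :
  a != 0 -> char_poly A = \prod_(i < n) ('X - (q i)%:P) ->
  char_poly (a *: A + c%:M) = \prod_(i < n) ('X - (a * q i + c)%:P).
Proof.
move=> a_neq0 charA.
pose phi := comp_poly (a^-1 *: ('X - c%:P)).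
have subst_lin b : a%:P * phi ('X - b%:P) = 'X - (a * b + c)%:P.
  rewrite /phi comp_polyB comp_polyX comp_polyC -mul_polyC mulrBr mulrA.
  by rewrite -polyCM mulfV // mul1r -polyCM polyCD opprD addrA addrAC.
have char_mx_affine :
    char_poly_mx (a *: A + c%:M) = a%:P *: map_mx phi (char_poly_mx A).
  apply/matrixP => i j; rewrite !mxE; case: (i == j) => /=.
    by rewrite !mulr1n subst_lin.
  by rewrite !mulr0n !sub0r addr0 /phi -!polyCN comp_polyC -polyCM mulrN.
rewrite /char_poly char_mx_affine detZ det_map_mx /= -/(char_poly A) charA.
rewrite rmorph_prod.
rewrite -[in X in X * _](card_ord n) -prodr_const -big_split /=.
by apply: eq_bigr => i _; rewrite subst_lin.
Qed.

Lemma big_enum_fst {R : Type} {idx : R} {op : Monoid.com_law idx}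
    {T : finType} {s} (F : T -> R) :
  \big[op/idx]_(k < #|{: T * 'I_s}|) F (enum_val k).1 =
  \big[op/idx]_u \big[op/idx]_(j < s) F u.
Proof. by rewrite -(big_enum_val (fun p : T * 'I_s => F p.1)) pair_bigA. Qed.

Lemma sum_enum_val_delta (R : nzRingType) (T : finType) (w : T)
    (G : 'I_#|T| -> R) :
  \sum_(u < #|T|) (w == enum_val u)%:R * G u = G (enum_rank w).
Proof.
rewrite (bigD1 (enum_rank w)) //= enum_rankK eqxx mul1r big1 ?addr0 //.
move=> u /negPf; rewrite -(inj_eq enum_val_inj) enum_rankK eq_sym => ->.
by rewrite mul0r.
Qed.

Lemma sum_enum_fst_delta (R : nzRingType) (T : finType) s (G : T -> R) (v : T) :
  \sum_(k < #|{: T * 'I_s}|) G (enum_val k).1 * ((enum_val k).1 == v)%:R =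
  s%:R * G v.
Proof.
rewrite (big_enum_fst (fun u => G u * (u == v)%:R)) (bigD1 v) //=.
rewrite [X in _ + X]big1 => [|u /negPf uv]; last by rewrite uv mulr0 big1.
by rewrite eqxx mulr1 sumr_const card_ord mulr_natl addr0.
Qed.

Section BlowupCharPoly.

Variables (R : idomainType) (T : finType) (s : nat).

Definition blowup_index (i : 'I_(#|T| + #|{: T * 'I_s}|)) : T * 'I_s.+1 :=
  match split i with
  | inl a => (enum_val a, ord0)
  | inr k => ((enum_val k).1, lift ord0 (enum_val k).2)
  end.

Definition blowup_rank (x : T * 'I_s.+1) : 'I_(#|T| + #|{: T * 'I_s}|) :=
  match unlift ord0 x.2 with
  | None => lshift _ (enum_rank x.1)
  | Some j => rshift _ (enum_rank (x.1, j))
  end.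

Lemma blowup_index_bij : bijective blowup_index.
Proof.
exists blowup_rank.
  move=> i; rewrite /blowup_index /blowup_rank -[i]splitK; case: (split i) => a /=.
    by rewrite (unsplitK (inl _ a)) /= unlift_none enum_valK.
  by rewrite (unsplitK (inr _ a)) /= liftK -surjective_pairing enum_valK.
move=> [u a]; rewrite /blowup_index /blowup_rank /=; case: unliftP => [j ->|->] /=.
  by rewrite (unsplitK (inr _ (enum_rank (u, j)))) /= enum_rankK.
by rewrite (unsplitK (inl _ (enum_rank u))) /= enum_rankK.
Qed.

Lemma blowup_index_lshift a : blowup_index (lshift _ a) = (enum_val a, ord0).
Proof. by rewrite /blowup_index (unsplitK (inl _ a)). Qed.

Lemma blowup_index_rshift k :
  blowup_index (rshift _ k) = ((enum_val k).1, lift ord0 (enum_val k).2).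
Proof. by rewrite /blowup_index (unsplitK (inr _ k)). Qed.

Variables (M : T -> T -> R) (y : T -> R).

Let F (a b : T * 'I_s.+1) := M a.1 b.1 + (a == b)%:R * y a.1.

Let C : 'M[R]_(#|{: T * 'I_s}|, #|T|) :=
  \matrix_(k, v) ((enum_val k).1 == enum_val v)%:R.

Let B11 : 'M[R]_#|T| :=
  \matrix_(u, v) (s.+1%:R * M (enum_val u) (enum_val v) +
                  (u == v)%:R * y (enum_val u)).

Let B12 : 'M[R]_(#|T|, #|{: T * 'I_s}|) :=
  \matrix_(u, k) M (enum_val u) (enum_val k).1.

Let B22 : 'M[R]_#|{: T * 'I_s}| :=
  \matrix_(k, l) ((k == l)%:R * y (enum_val k).1).

(* The columns of [block_mx 1 0 C 1] are the indicator vectors of the classes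
   [{u} * 'I_s.+1] and the unit vectors of the copies [(u, i)], [i != 0]. *)
Lemma blowup_mx_block_similar :
  \matrix_(i, j) F (blowup_index i) (blowup_index j) *m block_mx 1%:M 0 C 1%:M =
  block_mx 1%:M 0 C 1%:M *m block_mx B11 B12 0 B22.
Proof.
have eq_index := inj_eq (bij_inj blowup_index_bij).
rewrite -[X in X *m _]submxK !mulmx_block.
rewrite !mulmx1 !mul1mx !mulmx0 !mul0mx !addr0 !add0r.
congr block_mx; apply/matrixP => i j; rewrite !mxE.
- rewrite /F eq_index eq_lshift.
  under eq_bigr => k _ do rewrite !mxE /F eq_index eq_lrshift mul0r addr0
    !blowup_index_lshift !blowup_index_rshift.
  rewrite sum_enum_fst_delta !blowup_index_lshift /=; ring.
- rewrite /F eq_index eq_lrshift mul0r addr0.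
  by rewrite !blowup_index_lshift blowup_index_rshift.
- rewrite /F eq_index eq_rlshift mul0r addr0.
  under eq_bigr => k _ do
    rewrite !mxE /F eq_index eq_rshift !blowup_index_rshift mulrDl.
  rewrite big_split /= sum_enum_fst_delta.
  under [in RHS]eq_bigr => k _ do rewrite !mxE.
  rewrite sum_enum_val_delta (bigD1 i) //= eqxx mul1r big1 ?addr0; last first.
    by move=> k /negPf ki; rewrite eq_sym ki !mul0r.
  rewrite blowup_index_lshift blowup_index_rshift /= !enum_rankK.
  rewrite -[enum_rank _ == j](inj_eq enum_val_inj) enum_rankK; ring.
- rewrite /F eq_index eq_rshift !blowup_index_rshift.
  under [in RHS]eq_bigr => k _ do rewrite !mxE.
  by rewrite sum_enum_val_delta enum_rankK.
Qed.

Lemma char_poly_blowup_mx :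
  char_poly (\matrix_(i, j) (M (enum_val i).1 (enum_val j).1 +
                             (i == j)%:R * y (enum_val i).1)
             : 'M[R]_#|{: T * 'I_s.+1}|) =
  char_poly B11 * \prod_u ('X - (y u)%:P) ^+ s.
Proof.
have -> : \matrix_(i, j) (M (enum_val i).1 (enum_val j).1 +
                          (i == j)%:R * y (enum_val i).1) =
          \matrix_(i, j) F (enum_val i) (enum_val j) :> 'M[R]_#|{: T * 'I_s.+1}|.
  by apply/matrixP => i j; rewrite !mxE /F (inj_eq enum_val_inj).
rewrite -(char_poly_reindex _ F blowup_index_bij).
rewrite (char_poly_similar _ _ _ blowup_mx_block_similar); last first.
  by rewrite det_lblock !det1 mulr1 oner_neq0.
rewrite char_poly_ublock; congr (_ * _); rewrite char_poly_trig; last first.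
  by apply/is_trig_mxP => i j ij; rewrite mxE -val_eqE /= (ltn_eqF ij) mul0r.
rewrite (eq_bigr (fun k => 'X - (y (enum_val k).1)%:P)); last first.
  by move=> k _; rewrite mxE eqxx mul1r.
rewrite (big_enum_fst (fun u => 'X - (y u)%:P)).
by apply: eq_bigr => u _; rewrite prodr_const card_ord.
Qed.

End BlowupCharPoly.

Lemma deg_compl (T : finType) (e : rel T) x : irreflexive e ->
  (deg (compl_graph e) x + deg e x).+1 = #|T|.
Proof.
move=> irr; rewrite /deg.
have -> : [set y | compl_graph e x y] = ~: [set y | e x y] :\ x.
  by apply/setP => y; rewrite !inE /compl_graph eq_sym.
have := cardsD1 x (~: [set y | e x y]); rewrite !inE irr /= => card_C.
by rewrite -addSn -add1n -card_C addnC cardsC.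
Qed.

Lemma blowup_irreflexive (T : finType) t (e : rel T) :
  irreflexive e -> irreflexive (blowup t e).
Proof. by move=> irr x; apply: irr. Qed.

Lemma deg_blowup (T : finType) t (e : rel T) x :
  deg (blowup t e) x = (t * deg e x.1)%N.
Proof.
rewrite /deg.
have -> : [set y | blowup t e x y] = setX [set v | e x.1 v] [set: 'I_t].
  by apply/setP => [[v j]]; rewrite !inE andbT.
by rewrite cardsX cardsT card_ord mulnC.
Qed.

(* The diagonal entry [n - 1 - d] is split as [1 + (n - d - 2)], the [1]
   completing [J - A] on the diagonal. *)
Lemma sless_lap_compl (R : comNzRingType) (T : finType) (e : rel T) :
  irreflexive e ->
  sless_lap R (compl_graph e) =
  \matrix_(i, j) ((~~ e (enum_val i) (enum_val j))%:R +
                  (i == j)%:R * (#|T|%:R - (deg e (enum_val i))%:R - 2)).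
Proof.
move=> irr; apply/matrixP => i j; rewrite !mxE /compl_graph -(inj_eq enum_val_inj).
case: eqP => [<-|_]; last by rewrite !mul0r add0r addr0.
have card_T : #|T|%:R = (deg (compl_graph e) (enum_val i))%:R +
                        (deg e (enum_val i))%:R + 1 :> R.
  by rewrite -natrD natr1 deg_compl.
rewrite irr card_T /=; ring.
Qed.

Theorem theorem3 (R : rcfType) (T : finType) (e : rel T) (t : nat)
    (q : 'I_#|T| -> R) :
  simple_graph e -> (1 <= t)%N ->
  char_poly (sless_lap R (compl_graph e)) = \prod_(i < #|T|) ('X - (q i)%:P) ->
  char_poly (sless_lap R (compl_graph (blowup t e))) =
    \prod_(i < #|T|) ('X - (t%:R * q i + 2 * (t - 1)%:R)%:P) *
    \prod_(x : T) ('X - ((t * #|T|)%:R - (t * deg e x)%:R - 2)%:P) ^+ (t - 1).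
Proof.
move=> [irr _]; case: t => [//|s] _ charQ; rewrite subSS subn0.
rewrite sless_lap_compl // in charQ.
pose nonadj u v : R := (~~ e u v)%:R.
pose shift u : R := (s.+1 * #|T|)%:R - (s.+1 * deg e u)%:R - 2.
have -> : sless_lap R (compl_graph (blowup s.+1 e)) =
    \matrix_(i, j) (nonadj (enum_val i).1 (enum_val j).1 +
                    (i == j)%:R * shift (enum_val i).1).
  have card_blowup : #|{: T * 'I_s.+1}|%:R = (s.+1 * #|T|)%:R :> R.
    by rewrite card_prod card_ord mulnC.
  rewrite sless_lap_compl; last exact: blowup_irreflexive.
  by apply/matrixP => i j; rewrite !mxE card_blowup deg_blowup.
rewrite (char_poly_blowup_mx _ _ s nonadj shift); congr (_ * _).
rewrite -(char_poly_affine _ charQ) ?pnatr_eq0 //.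
congr char_poly; apply/matrixP => u v; rewrite !mxE /nonadj /shift.
by case: (u == v) => /=; ring.
Qed.
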